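(* Let $R$ be a simple ring, $I$ a non-empty countable set, $D=\{\delta_i\mid i\in I\}$ a family of derivations of $R$, $X=\{x_i\mid i\in I\}$ a set of distinct non-commuting indeterminates, and suppose $S=R[X;D]$ is left quasi-duo or right quasi-duo. Then $R$ is a field, $\delta_i=0$ for all $i\in I$, and $|I|=1$.
   Context: All rings are unital and associative. A derivation of $R$ is an additive map $\delta:R\to R$ with $\delta(rs)=r\delta(s)+\delta(r)s$. The differential polynomial ring in several indeterminates $R[X;D]$ is the set of all (noncommutative) polynomials in the indeterminates $x_i\in X$ (finite $R$-linear combinations of monomials, i.e. finite words in the alphabet $X$, with coefficients on the left), with natural addition and multiplication generated by $x_ia=ax_i+\delta_i(a)$ for $a\in R$, $i\in I$. A ring is left (right) quasi-duo if every maximal left (right) ideal is two-sided. *)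

From mathcomp Require Import all_boot all_order all_algebra.
Set Implicit Arguments. Unset Strict Implicit. Unset Printing Implicit Defensive.
Import GRing.Theory.
Local Open Scope ring_scope.

Definition is_derivation (R : nzRingType) (d : R -> R) : Prop :=
  (forall a b, d (a + b) = d a + d b) /\
  (forall a b, d (a * b) = a * d b + d a * b).

Definition ring_ideal (R : nzRingType) (J : R -> Prop) : Prop :=
  [/\ J 0, (forall a b, J a -> J b -> J (a + b)), (forall a, J a -> J (- a)),
      (forall r a, J a -> J (r * a)) & (forall r a, J a -> J (a * r))].

Definition simple_ring (R : nzRingType) : Prop :=
  forall J : R -> Prop, ring_ideal J -> (forall a, J a -> a = 0) \/ (forall a, J a).

Definition is_field (R : nzRingType) : Prop :=
  (forall a b : R, a * b = b * a) /\
  (forall a : R, a != 0 -> exists b, a * b = 1 /\ b * a = 1).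

(* An element of S is represented by a formal finite sum
     sum_k  a_k x_{w_k}
   encoded as a list of pairs (a_k, w_k), where w_k : seq I is a word
   (a monomial in the non-commuting indeterminates x_i), coefficients
   on the left.  Two representations denote the same element of S iff
   they have the same coefficient function [dcoef]. *)

Section DiffPoly.
Variables (R : nzRingType) (I : countType) (d : I -> R -> R).

Definition dpoly := seq (R * seq I).

Definition dcoef (p : dpoly) (w : seq I) : R :=
  \sum_(t <- p | t.2 == w) t.1.

Definition deqv (p q : dpoly) : Prop := forall w, dcoef p w = dcoef q w.

Definition dzero : dpoly := [::].
Definition done_ : dpoly := [:: (1, [::])].
Definition dadd (p q : dpoly) : dpoly := p ++ q.
Definition dopp (p : dpoly) : dpoly := [seq (- t.1, t.2) | t <- p].

(* x_w * b, rewritten with coefficients on the left using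
   x_i a = a x_i + d_i(a). *)
Fixpoint dwmul (w : seq I) (b : R) : dpoly :=
  match w with
  | [::] => [:: (b, [::])]
  | i :: w' => flatten [seq [:: (c.1, i :: c.2); (d i c.1, c.2)] | c <- dwmul w' b]
  end.

(* (a x_w)(b x_v) = a (x_w b) x_v, extended bilinearly *)
Definition dmul (p q : dpoly) : dpoly :=
  flatten [seq [seq (s.1 * c.1, c.2 ++ t.2) | c <- dwmul s.2 t.1] | s <- p, t <- q].

(* A subset of S: a predicate on representations invariant under deqv. *)
Definition dsubset (L : dpoly -> Prop) : Prop :=
  forall p q, deqv p q -> L p -> L q.

Definition dadditive (L : dpoly -> Prop) : Prop :=
  [/\ dsubset L, L dzero, (forall p q, L p -> L q -> L (dadd p q))
    & (forall p, L p -> L (dopp p))].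

Definition left_ideal (L : dpoly -> Prop) : Prop :=
  dadditive L /\ (forall s p, L p -> L (dmul s p)).

Definition right_ideal (L : dpoly -> Prop) : Prop :=
  dadditive L /\ (forall s p, L p -> L (dmul p s)).

Definition two_sided_ideal (L : dpoly -> Prop) : Prop :=
  left_ideal L /\ right_ideal L.

Definition max_left_ideal (L : dpoly -> Prop) : Prop :=
  [/\ left_ideal L, (exists p, ~ L p)
    & forall L', left_ideal L' -> (forall p, L p -> L' p) ->
        (forall p, L' p -> L p) \/ (forall p, L' p)].

Definition max_right_ideal (L : dpoly -> Prop) : Prop :=
  [/\ right_ideal L, (exists p, ~ L p)
    & forall L', right_ideal L' -> (forall p, L p -> L' p) ->
        (forall p, L' p -> L p) \/ (forall p, L' p)].

Definition left_quasi_duo : Prop :=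
  forall L, max_left_ideal L -> two_sided_ideal L.

Definition right_quasi_duo : Prop :=
  forall L, max_right_ideal L -> two_sided_ideal L.

End DiffPoly.

(* If S is left quasi-duo, Zorn's lemma
   puts every proper left ideal L into a maximal left ideal, which is then a proper
   two-sided ideal M; M meets R in a proper ideal of the simple ring R, i.e. in 0.
   Hence for p in M and b in R, a constant commutator p b - b p must vanish.  We
   choose L as the annihilator of a nonzero vector in a left S-module:
   - R, with x_i acting as d_i: x_i kills 1, and x_i b - b x_i = d_i b, so D = 0;
   - then R, with x_i acting as right multiplication by a: x_i - a kills 1, and
     (x_i - a) b - b (x_i - a) = b a - a b, so R is commutative, hence a field;
   - then R^2, with x_i and x_i0 acting as the shifts e0 |-> e1 and e1 |-> e0:
     x_i0 and x_i0 x_i - 1 kill e0, yet x_i0 x_i lies in M with x_i0, so 1 in M.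
   The right quasi-duo case is symmetric, with right modules (x_i acting on R as
   -d_i in the first step). *)

From mathcomp Require Import all_boot all_order all_algebra.
From mathcomp Require Import boolp classical_sets.
Set Implicit Arguments. Unset Strict Implicit. Unset Printing Implicit Defensive.
Import GRing.Theory.
Local Open Scope ring_scope.

Lemma addmorph0 (U V : zmodType) (f : U -> V) : {morph f : u v / u + v} -> f 0 = 0.
Proof. by move=> fD; apply: (addrI (f 0)); rewrite -fD !addr0. Qed.

Lemma addmorphN (U V : zmodType) (f : U -> V) :
  {morph f : u v / u + v} -> {morph f : u / - u}.
Proof. by move=> fD u; apply: (addrI (f u)); rewrite -fD !subrr addmorph0. Qed.

Lemma addmorph_sum (U V : zmodType) (f : U -> V) : {morph f : u v / u + v} ->
  forall (T : Type) (r : seq T) (P : pred T) (g : T -> U),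
  f (\sum_(x <- r | P x) g x) = \sum_(x <- r | P x) f (g x).
Proof. by move=> fD; apply: big_morph fD (addmorph0 fD). Qed.

Section DiffPolyTheory.
Variables (R : nzRingType) (I : countType) (d : I -> R -> R).

Lemma dcoef_cons t (p : dpoly R I) w :
  dcoef (t :: p) w = (if t.2 == w then t.1 else 0) + dcoef p w.
Proof. by rewrite /dcoef big_cons; case: ifP; rewrite ?add0r. Qed.

Lemma dcoef_nil w : dcoef (dzero R I) w = 0.
Proof. by rewrite /dcoef big_nil. Qed.

Section DSum.
Variables (V : zmodType) (F : R -> seq I -> V).

Definition dsum (p : dpoly R I) : V := \sum_(t <- p) F t.1 t.2.

Lemma dsum_cat p q : dsum (p ++ q) = dsum p + dsum q.
Proof. exact: big_cat. Qed.

Lemma dsum_dmul p q : dsum (dmul d p q) =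
  \sum_(s <- p) \sum_(t <- q) \sum_(c <- dwmul d s.2 t.1) F (s.1 * c.1) (c.2 ++ t.2).
Proof.
rewrite /dsum big_flatten /= big_allpairs_dep.
by apply: eq_bigr => s _; apply: eq_bigr => t _; rewrite big_map.
Qed.

Hypothesis F_add : forall w, {morph F ^~ w : a b / a + b}.

Lemma dsum_dcoef p (s : seq (seq I)) : uniq s -> {subset map snd p <= s} ->
  dsum p = \sum_(w <- s) F (dcoef p w) w.
Proof.
move=> s_uniq p_s; under [RHS]eq_bigr => w _ do rewrite (addmorph_sum (F_add w)) big_mkcond.
rewrite exchange_big; apply: eq_big_seq => t tp /=.
rewrite (bigD1_seq t.2) ?p_s ?(map_f snd tp) //= eqxx big1 ?addr0 // => w.
by rewrite eq_sym => /negbTE ->.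
Qed.

Lemma eq_dsum p q : deqv p q -> dsum p = dsum q.
Proof.
move=> pq; set s := undup (map snd (p ++ q)).
have [sub_p sub_q] : {subset map snd p <= s} /\ {subset map snd q <= s}.
  by split=> w w_in; rewrite mem_undup map_cat mem_cat w_in ?orbT.
rewrite (dsum_dcoef (undup_uniq _) sub_p) (dsum_dcoef (undup_uniq _) sub_q).
by apply: eq_bigr => w _; rewrite pq.
Qed.

Lemma dsum_dopp p : dsum (dopp p) = - dsum p.
Proof.
by rewrite /dsum big_map -sumrN; apply: eq_bigr => t _; rewrite (addmorphN (F_add _)).
Qed.

Lemma dsum_kernel_dadditive : dadditive (fun p => dsum p = 0).
Proof.
split.
- by move=> p q /eq_dsum <-.
- exact: big_nil.
- by move=> p q p0 q0; rewrite /dadd dsum_cat p0 q0 addr0.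
- by move=> p p0; rewrite dsum_dopp p0 oppr0.
Qed.

End DSum.

Lemma dcoef_dsum p w : dcoef p w = dsum (fun a u => if u == w then a else 0) p.
Proof. exact: big_mkcond. Qed.

Lemma dmul_onel s : deqv (dmul d (done_ R I) s) s.
Proof.
move=> w; rewrite !dcoef_dsum dsum_dmul big_seq1.
by apply: eq_bigr => t _; rewrite big_seq1 /= mul1r.
Qed.

Section MaximalIdeals.
Variable m : dpoly R I -> dpoly R I -> dpoly R I.
Hypothesis m_one : forall s, deqv (m s (done_ R I)) s.

(* With m s p := dmul d s p these are left_ideal and max_left_ideal, with
   m s p := dmul d p s they are right_ideal and max_right_ideal. *)
Definition one_sided_ideal (L : dpoly R I -> Prop) : Prop :=
  dadditive L /\ forall s p, L p -> L (m s p).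

Definition max_one_sided_ideal (L : dpoly R I -> Prop) : Prop :=
  [/\ one_sided_ideal L, (exists p, ~ L p)
    & forall L', one_sided_ideal L' -> (forall p, L p -> L' p) ->
        (forall p, L' p -> L p) \/ (forall p, L' p)].

Lemma one_sided_ideal_one L : one_sided_ideal L -> L (done_ R I) -> forall p, L p.
Proof. by case=> -[L_deqv _ _ _] L_m L1 p; apply: L_deqv (m_one p) (L_m p _ L1). Qed.

Local Open Scope classical_set_scope.

Lemma bigcup_one_sided_ideal (F : set (set (dpoly R I))) :
  total_on F subset -> F `<=` one_sided_ideal -> F !=set0 ->
  one_sided_ideal (\bigcup_(A in F) A).
Proof.
move=> F_tot F_ideal [A0 FA0].
have [[_ A0_zero _ _] _] := F_ideal A0 FA0.
split; first split.
- move=> p q pq [A FA Ap]; have [[A_deqv _ _ _] _] := F_ideal A FA.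
  by exists A => //; exact: A_deqv pq Ap.
- by exists A0.
- move=> p q [A FA Ap] [B FB Bq].
  have [AB|BA] := F_tot A B FA FB.
  + have [[_ _ B_add _] _] := F_ideal B FB.
    by exists B => //; exact: B_add (AB _ Ap) Bq.
  + have [[_ _ A_add _] _] := F_ideal A FA.
    by exists A => //; exact: A_add Ap (BA _ Bq).
- move=> p [A FA Ap]; have [[_ _ _ A_opp] _] := F_ideal A FA.
  by exists A => //; exact: A_opp.
- move=> s p [A FA Ap]; have [_ A_m] := F_ideal A FA.
  by exists A => //; exact: A_m.
Qed.

Lemma exists_max_one_sided_ideal L : one_sided_ideal L -> ~ L (done_ R I) ->
  exists M, [/\ max_one_sided_ideal M, (forall p, L p -> M p) & ~ M (done_ R I)].
Proof.
move=> L_ideal L1.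
pose Good A := [/\ one_sided_ideal A, L `<=` A & ~ A (done_ R I)].
(* The empty set is allowed so that the empty chain has an upper bound. *)
pose P := [set A | A = set0 \/ Good A].
have [M [PM M_max]] : exists M, P M /\ forall B, M `<` B -> ~ P B.
  apply: Zorn_bigcup => F FP F_tot.
  pose F' := [set A | F A /\ A !=set0].
  have -> : \bigcup_(A in F) A = \bigcup_(A in F') A.
    apply/seteqP; split=> p [A FA Ap]; exists A => //; last by case: FA.
    by split=> //; exists p.
  have F'_good A : F' A -> Good A by case=> /FP [-> /set0P/eqP|].
  have [F'_ne|F'_0] := pselect (F' !=set0); last first.
    left; apply/seteqP; split=> p // [A F'A _]; apply: F'_0; by exists A.
  right; have [A0 F'A0] := F'_ne; split.
  - apply: bigcup_one_sided_ideal => //; first by move=> A B [FA _] [FB _]; exact: F_tot.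
    by move=> A /F'_good [].
  - by move=> p Lp; exists A0 => //; have [_ LA0 _] := F'_good _ F'A0; exact: LA0.
  - by case=> A /F'_good [].
have [M_ideal LM M1] : Good M.
  case: PM => // M0; exfalso; apply: (M_max L); last by right; split.
  rewrite M0; split; first by move=> p.
  by move=> /(_ (dzero R I)); apply; case: L_ideal => -[].
exists M; split=> //; split=> //; first by exists (done_ R I).
move=> L' L'_ideal ML'; have [L'1|L'1] := pselect (L' (done_ R I)).
  by right; exact: one_sided_ideal_one.
left=> p L'p; apply: contrapT => Mp; apply: (M_max L'); last first.
  by right; split=> // q Lq; exact: ML' (LM q Lq).
by split=> // L'M; apply: Mp; exact: L'M.
Qed.

End MaximalIdeals.

Section Derivations.
Hypothesis hder : forall i, is_derivation (d i).

Lemma derivation1 i : d i 1 = 0.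
Proof.
have [_ d_mul] := hder i; have := d_mul 1 1; rewrite !mul1r mulr1 => d11.
by apply: (addrI (d i 1)); rewrite -d11 addr0.
Qed.

Lemma dwmul_one_coef w c : c \in dwmul d w 1 -> c.1 = 1 \/ c.1 = 0.
Proof.
elim: w c => [|i w IH] c /=; first by rewrite inE => /eqP ->; left.
case/flattenP=> _ /mapP[c' /IH c'1 ->]; rewrite !inE => /orP[] /eqP -> //=.
by right; case: c'1 => ->; rewrite ?derivation1 ?(addmorph0 (hder i).1).
Qed.

Lemma dwmul_one w (V : zmodType) (F : R -> seq I -> V) : (forall u, F 0 u = 0) ->
  \sum_(c <- dwmul d w 1) F c.1 c.2 = F 1 w.
Proof.
elim: w F => [|i w IH] F F0 /=; first by rewrite big_seq1.
rewrite big_flatten /= big_map -(IH (fun a u => F a (i :: u))) //.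
apply: eq_big_seq => c /dwmul_one_coef c1; rewrite big_cons big_seq1 /=.
by case: c1 => ->; rewrite ?derivation1 ?(addmorph0 (hder i).1) !F0 ?addr0.
Qed.

Lemma dmul_oner s : deqv (dmul d s (done_ R I)) s.
Proof.
move=> w; rewrite !dcoef_dsum dsum_dmul; apply: eq_bigr => t _.
rewrite big_seq1 (dwmul_one _ (F := fun a u => if u ++ [::] == w then t.1 * a else 0)).
  by rewrite mulr1 cats0.
by move=> u; rewrite mulr0 if_same.
Qed.

End Derivations.

Section LeftModule.
Variables (V : lmodType R) (X : I -> V -> V).
Hypothesis X_add : forall i, {morph X i : u v / u + v}.
Hypothesis X_scale : forall i a v, X i (a *: v) = a *: X i v + d i a *: v.

Definition xact (w : seq I) (v : V) : V := foldr X v w.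

Definition lact (p : dpoly R I) (v : V) : V := dsum (fun a w => a *: xact w v) p.

Lemma xact_add w : {morph xact w : u v / u + v}.
Proof. by elim: w => // i w IH u v; rewrite /xact /= -/(xact _ _) IH X_add. Qed.

Lemma xact_dwmul w b v :
  \sum_(c <- dwmul d w b) c.1 *: xact c.2 v = xact w (b *: v).
Proof.
elim: w => [|i w IH] /=; first by rewrite big_seq1.
rewrite big_flatten /= big_map -IH (addmorph_sum (X_add i)).
by apply: eq_bigr => c _; rewrite big_cons big_seq1 X_scale.
Qed.

Lemma lact_dmul s p v : lact (dmul d s p) v = lact s (lact p v).
Proof.
rewrite /lact dsum_dmul; apply: eq_bigr => x _.
rewrite (addmorph_sum (xact_add _)) scaler_sumr; apply: eq_bigr => t _.
rewrite -xact_dwmul scaler_sumr; apply: eq_bigr => c _.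
by rewrite /xact foldr_cat scalerA.
Qed.

Lemma lact_one v : lact (done_ R I) v = v.
Proof. by rewrite /lact /dsum big_seq1 scale1r. Qed.

Definition lann (v : V) (p : dpoly R I) : Prop := lact p v = 0.

Lemma lann_left_ideal v : left_ideal d (lann v).
Proof.
split; first by apply: dsum_kernel_dadditive => w a b; rewrite scalerDl.
move=> s p; rewrite /lann lact_dmul => ->.
by rewrite /lact /dsum big1 // => x _; rewrite (addmorph0 (xact_add _)) scaler0.
Qed.

Lemma left_quasi_duo_lann_proper : (forall i, is_derivation (d i)) -> left_quasi_duo d ->
  forall v, v != 0 ->
  exists M, [/\ two_sided_ideal d M, (forall p, lann v p -> M p) & ~ M (done_ R I)].
Proof.
move=> hder qd v v0; have [|M [M_max annM M1]] :=
  exists_max_one_sided_ideal (dmul_oner hder) (lann_left_ideal v).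
  by rewrite /lann lact_one; exact/eqP.
by exists M; split=> //; exact: qd.
Qed.

End LeftModule.

(* A right S-module, as a left R^c-module: a *: v stands for v a, Y i v for
   v x_i, and yact w v for v x_(w_1) ... x_(w_n). *)
Section RightModule.
Variables (V : lmodType R^c) (Y : I -> V -> V).
Hypothesis Y_add : forall i, {morph Y i : u v / u + v}.
Hypothesis Y_scale : forall i (a : R^c) v, a *: Y i v = Y i (a *: v) + (d i a : R^c) *: v.

Definition yact (w : seq I) (v : V) : V := foldl (fun u i => Y i u) v w.

Definition ract (v : V) (p : dpoly R I) : V := dsum (fun a w => yact w ((a : R^c) *: v)) p.

Lemma yact_add w : {morph yact w : u v / u + v}.
Proof. by elim: w => // i w IH u v; rewrite /yact /= Y_add -/(yact _ _) IH. Qed.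

Lemma yact_dwmul w b v :
  \sum_(c <- dwmul d w b) yact c.2 ((c.1 : R^c) *: v) = (b : R^c) *: yact w v.
Proof.
elim: w v => [|i w IH] v /=; first by rewrite big_seq1.
rewrite big_flatten /= big_map -IH.
by apply: eq_bigr => c _; rewrite big_cons big_seq1 /= -yact_add -Y_scale.
Qed.

Lemma ract_dmul p s v : ract v (dmul d p s) = ract (ract v p) s.
Proof.
rewrite /ract dsum_dmul exchange_big /=; apply: eq_bigr => t _.
rewrite scaler_sumr (addmorph_sum (yact_add _)); apply: eq_bigr => x _.
rewrite -yact_dwmul (addmorph_sum (yact_add _)); apply: eq_bigr => c _.
by rewrite /yact foldl_cat scalerA.
Qed.

Lemma ract_one v : ract v (done_ R I) = v.
Proof. by rewrite /ract /dsum big_seq1 scale1r. Qed.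

Definition rann (v : V) (p : dpoly R I) : Prop := ract v p = 0.

Lemma rann_right_ideal v : right_ideal d (rann v).
Proof.
split; first by apply: dsum_kernel_dadditive => w a b; rewrite scalerDl yact_add.
move=> s p; rewrite /rann ract_dmul => ->.
by rewrite /ract /dsum big1 // => t _; rewrite scaler0 (addmorph0 (yact_add _)).
Qed.

Lemma right_quasi_duo_rann_proper : right_quasi_duo d -> forall v, v != 0 ->
  exists M, [/\ two_sided_ideal d M, (forall p, rann v p -> M p) & ~ M (done_ R I)].
Proof.
move=> qd v v0; have [|M [M_max annM M1]] :=
  exists_max_one_sided_ideal (m := fun s p => dmul d p s) dmul_onel (rann_right_ideal v).
  by rewrite /rann ract_one; exact/eqP.
by exists M; split=> //; exact: qd.
Qed.

End RightModule.

Section ProperTwoSidedIdeal.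
Hypothesis R_simple : simple_ring R.
Variable M : dpoly R I -> Prop.
Hypotheses (M_ideal : two_sided_ideal d M) (M1 : ~ M (done_ R I)).

Lemma proper_ideal_const_eq0 p r : M p -> deqv p [:: (r, [::])] -> r = 0.
Proof.
have [[[M_deqv M0 M_add M_opp] M_l] [_ M_r]] := M_ideal.
pose J r := M [:: (r, [::])].
have J_ideal : ring_ideal J.
  split.
  - by apply: M_deqv M0 => w; rewrite dcoef_nil dcoef_cons dcoef_nil addr0 if_same.
  - move=> a b Ja Jb; apply: M_deqv (M_add _ _ Ja Jb) => w.
    by rewrite /dadd /= !dcoef_cons dcoef_nil; case: ifP; rewrite ?addr0.
  - by move=> a Ja; exact: M_opp Ja.
  - by move=> a b Jb; exact: M_l [:: (a, [::])] _ Jb.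
  - by move=> a b Jb; exact: M_r [:: (a, [::])] _ Jb.
move=> Mp pr; case: (R_simple J_ideal) => [J0|J1]; last by case: M1; exact: J1 1.
by apply: J0; exact: M_deqv Mp.
Qed.

Lemma two_sided_commutator_mem p b : M p ->
  M (dadd (dmul d p [:: (b, [::])]) (dopp (dmul d [:: (b, [::])] p))).
Proof.
have [[[_ _ M_add M_opp] M_l] [_ M_r]] := M_ideal.
by move=> Mp; apply: M_add; [exact: M_r | apply: M_opp; exact: M_l].
Qed.

Lemma proper_ideal_var_derivation0 i : M [:: (1, [:: i])] -> forall b, d i b = 0.
Proof.
move=> Mx b; apply: (proper_ideal_const_eq0 (two_sided_commutator_mem b Mx)) => w /=.
rewrite !dcoef_cons dcoef_nil /= !mul1r mulr1 !addr0.
by case: ([:: i] == w); rewrite addrCA ?subrr ?add0r ?addr0.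
Qed.

Section ZeroDerivations.
Hypothesis d0 : forall i a, d i a = 0.

Lemma proper_ideal_var_sub_central i a :
  M [:: (1, [:: i]); (- a, [::])] -> forall b, a * b = b * a.
Proof.
move=> Mx b; apply/eqP; rewrite eq_sym -subr_eq0; apply/eqP.
apply: (proper_ideal_const_eq0 (two_sided_commutator_mem b Mx)) => w /=.
rewrite !dcoef_cons dcoef_nil /= d0 !mulr0 !mul1r !mulr1 !addr0 mulrN mulNr opprK.
case: w => [|j w] /=; first by rewrite !add0r addrC.
by case: ([:: i] == j :: w); rewrite ?add0r ?addr0 ?subrr.
Qed.

Lemma proper_ideal_var_mul_sub1 u v : M [:: (1, [:: u])] ->
  ~ M [:: (1, [:: u; v]); (-1, [::])] /\ ~ M [:: (1, [:: v; u]); (-1, [::])].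
Proof.
have [[[M_deqv _ M_add M_opp] M_l] [_ M_r]] := M_ideal.
move=> Mx; split=> Mq; apply: M1.
- apply: M_deqv (M_add _ _ (M_r [:: (1, [:: v])] _ Mx) (M_opp _ Mq)) => w /=.
  rewrite !dcoef_cons dcoef_nil /= d0 !mul1r !addr0 if_same opprK.
  by case: ([:: u; v] == w); rewrite !add0r ?addNKr.
- apply: M_deqv (M_add _ _ (M_l [:: (1, [:: v])] _ Mx) (M_opp _ Mq)) => w /=.
  rewrite !dcoef_cons dcoef_nil /= d0 !mul1r !addr0 if_same opprK.
  by case: ([:: v; u] == w); rewrite !add0r ?addNKr.
Qed.

End ZeroDerivations.

End ProperTwoSidedIdeal.

Definition shift2 (V : zmodType) (i i0 j : I) (u : V * V) : V * V :=
  if j == i then (0, u.1) else if j == i0 then (u.2, 0) else 0.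

Lemma shift2_add (V : zmodType) i i0 j : {morph @shift2 V i i0 j : u v / u + v}.
Proof.
by move=> u v; rewrite /shift2; case: (j == i); case: (j == i0); congr (_, _);
  rewrite /= addr0.
Qed.

Lemma shift2_scale (K : pzRingType) (V : lmodType K) i i0 j (a : K) (u : V * V) :
  shift2 i i0 j (a *: u) = a *: shift2 i i0 j u.
Proof.
by rewrite /shift2; case: (j == i); case: (j == i0); congr (_, _); rewrite /= scaler0.
Qed.

Section QuasiDuo.
Hypotheses (R_simple : simple_ring R) (hder : forall i, is_derivation (d i)).
Hypothesis qd : left_quasi_duo d \/ right_quasi_duo d.

Lemma quasi_duo_derivation0 i b : d i b = 0.
Proof.
case: qd => [lqd|rqd].
- have [M [M_ideal annM M1]] := left_quasi_duo_lann_proper (V := R^o)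
    (fun i => (hder i).1) (fun i => (hder i).2) hder lqd (oner_neq0 R).
  apply: (proper_ideal_var_derivation0 R_simple M_ideal M1 (annM _ _)).
  by rewrite /lann /lact /dsum big_seq1 /= derivation1 // scaler0.
- pose Y i (u : R^c^o) : R^c^o := - d i u.
  have Y_add j : {morph Y j : u v / u + v} by move=> u v; rewrite /Y (hder j).1 opprD.
  have Y_scale j (a : R^c) v : a *: Y j v = Y j (a *: v) + (d j a : R^c) *: v.
    change ((- d j v : R) * (a : R) = - d j ((v : R) * (a : R)) + (v : R) * d j a).
    by rewrite (hder j).2 opprD addrAC addNr add0r mulNr.
  have [M [M_ideal annM M1]] := right_quasi_duo_rann_proper Y_add Y_scale rqd (oner_neq0 R).
  apply: (proper_ideal_var_derivation0 R_simple M_ideal M1 (annM _ _)).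
  by rewrite /rann /ract /dsum big_seq1 /= /Y scale1r derivation1 // oppr0.
Qed.

Lemma quasi_duo_commutative (i : I) (a b : R) : a * b = b * a.
Proof.
have d0 := quasi_duo_derivation0.
case: qd => [lqd|rqd].
- pose X (j : I) (u : R^o) : R^o := (u : R) * a.
  have X_add j : {morph X j : u v / u + v} by move=> u v; rewrite /X mulrDl.
  have X_scale j c v : X j (c *: v) = c *: X j v + d j c *: v.
    by rewrite d0 scale0r addr0 /X /= scalerAl.
  have [M [M_ideal annM M1]] :=
    left_quasi_duo_lann_proper X_add X_scale hder lqd (oner_neq0 R).
  apply: (proper_ideal_var_sub_central R_simple M_ideal M1 d0 (i := i) (annM _ _)).
  rewrite /lann /lact /dsum !big_cons big_nil /= /X.
  by change (1 * (1 * a) + (- a * 1 + 0) = 0 :> R); rewrite !mul1r mulr1 addr0 subrr.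
- pose Y (j : I) (u : R^c^o) : R^c^o := a * (u : R).
  have Y_add j : {morph Y j : u v / u + v} by move=> u v; rewrite /Y mulrDr.
  have Y_scale j (c : R^c) v : c *: Y j v = Y j (c *: v) + (d j c : R^c) *: v.
    change (a * (v : R) * (c : R) = a * ((v : R) * (c : R)) + (v : R) * d j c).
    by rewrite d0 mulr0 addr0 mulrA.
  have [M [M_ideal annM M1]] := right_quasi_duo_rann_proper Y_add Y_scale rqd (oner_neq0 R).
  apply: (proper_ideal_var_sub_central R_simple M_ideal M1 d0 (i := i) (annM _ _)).
  rewrite /rann /ract /dsum !big_cons big_nil /= /Y.
  by change (a * (1 * 1) + (1 * - a + 0) = 0 :> R); rewrite !mul1r mulr1 addr0 subrr.
Qed.

Lemma quasi_duo_single_variable (i0 i : I) : i = i0.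
Proof.
have d0 := quasi_duo_derivation0.
case: (eqVneq i i0) => // /negbTE i_neq; exfalso.
have i0_neq : (i0 == i) = false by rewrite eq_sym.
case: qd => [lqd|rqd].
- pose e0 : R^o * R^o := (1, 0).
  have X_scale j a (u : R^o * R^o) :
      shift2 i i0 j (a *: u) = a *: shift2 i i0 j u + d j a *: u.
    by rewrite d0 scale0r addr0 shift2_scale.
  have e0_neq0 : e0 != 0 by rewrite xpair_eqE oner_eq0.
  have [M [M_ideal annM M1]] :=
    left_quasi_duo_lann_proper (@shift2_add _ i i0) X_scale hder lqd e0_neq0.
  have ann_x : lann (shift2 i i0) e0 [:: (1, [:: i0])].
    by rewrite /lann /lact /dsum big_seq1 /= scale1r /shift2 i0_neq eqxx.
  have ann_q : lann (shift2 i i0) e0 [:: (1, [:: i0; i]); (-1, [::])].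
    rewrite /lann /lact /dsum !big_cons big_nil /= scale1r scaleN1r addr0.
    by rewrite /shift2 eqxx i0_neq eqxx /= subrr.
  exact: (proper_ideal_var_mul_sub1 M_ideal M1 d0 i (annM _ ann_x)).1 (annM _ ann_q).
- pose e0 : R^c^o * R^c^o := (1, 0).
  have Y_scale j (a : R^c) (u : R^c^o * R^c^o) :
      a *: shift2 i i0 j u = shift2 i i0 j (a *: u) + (d j a : R^c) *: u.
    by rewrite d0 scale0r addr0 shift2_scale.
  have e0_neq0 : e0 != 0 by rewrite xpair_eqE oner_eq0.
  have [M [M_ideal annM M1]] :=
    right_quasi_duo_rann_proper (@shift2_add _ i i0) Y_scale rqd e0_neq0.
  have ann_x : rann (shift2 i i0) e0 [:: (1, [:: i0])].
    by rewrite /rann /ract /dsum big_seq1 /= scale1r /shift2 i0_neq eqxx.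
  have ann_q : rann (shift2 i i0) e0 [:: (1, [:: i; i0]); (-1, [::])].
    rewrite /rann /ract /dsum !big_cons big_nil /= scale1r scaleN1r addr0.
    by rewrite /shift2 eqxx i0_neq eqxx /= subrr.
  exact: (proper_ideal_var_mul_sub1 M_ideal M1 d0 i (annM _ ann_x)).2 (annM _ ann_q).
Qed.

End QuasiDuo.
End DiffPolyTheory.

Lemma simple_commutative_field (R : nzRingType) :
  simple_ring R -> (forall a b : R, a * b = b * a) -> is_field R.
Proof.
move=> R_simple mulC; split=> // a a_neq0.
pose J x := exists r, x = a * r.
have J_ideal : ring_ideal J.
  split.
  - by exists 0; rewrite mulr0.
  - by move=> x y [r ->] [s ->]; exists (r + s); rewrite mulrDr.
  - by move=> x [r ->]; exists (- r); rewrite mulrN.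
  - by move=> r x [s ->]; exists (r * s); rewrite mulrA (mulC r a) -mulrA.
  - by move=> r x [s ->]; exists (s * r); rewrite mulrA.
case: (R_simple J J_ideal) => [J0|J1].
  by move: a_neq0; rewrite (J0 a) ?eqxx //; exists 1; rewrite mulr1.
have [r r_inv] := J1 1.
by exists r; split; [rewrite -r_inv | rewrite mulC -r_inv].
Qed.

Theorem lemma5p2 (R : nzRingType) (I : countType) (i0 : I)
    (d : I -> R -> R)
    (hsimple : simple_ring R)
    (hder : forall i, is_derivation (d i))
    (hqd : left_quasi_duo d \/ right_quasi_duo d) :
  is_field R /\ (forall i a, d i a = 0) /\ (forall i : I, i = i0).
Proof.
split; last split.
- exact: simple_commutative_field hsimple (quasi_duo_commutative hsimple hder hqd i0).
- exact: quasi_duo_derivation0 hsimple hder hqd.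
- exact: quasi_duo_single_variable hsimple hder hqd i0.
Qed.
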